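(* For every integer $k\ge1$, the maps $F:\mathbb{F}_q^k\to\mathbb{F}_q^k$ and $G:\mathbb{F}_q^k\to\mathbb{F}_q^k$ are inverse to one another; in particular both are bijections of $\mathbb{F}_q^k$.
   Context: Let $q>2$ be a prime power and $\mathbb{F}_q$ the field with $q$ elements; for $c\in\mathbb{F}_q$, $c^{q-2}$ denotes the field element (so $0^{q-2}=0$ and $c^{q-2}=c^{-1}$ for $c\neq0$). The map $F:\mathbb{F}_q^k\to\mathbb{F}_q^k$ sends $(a_1,\dots,a_k)$ to $(b_1,\dots,b_k)$ where $b_i:=c_{i,i}$, and for each $1\le i\le k$ the elements $c_{i,j}$ ($0\le j\le i$) are defined by $c_{i,0}:=0$ and $c_{i,j}:=c_{i,j-1}^{q-2}+a_{i-j+1}$. For $2\le\ell\le k$ let $\Phi_\ell:\mathbb{F}_q^\ell\to\mathbb{F}_q^{\ell-1}$ send $(e_1,\dots,e_\ell)$ to $((e_2-e_1)^{q-2},(e_3-e_1)^{q-2},\dots,(e_\ell-e_1)^{q-2})$. The map $G:\mathbb{F}_q^k\to\mathbb{F}_q^k$ sends $(b_1,\dots,b_k)$ to $(a_1,\dots,a_k)$ where $a_i$ is the first entry of $\Phi_{k-i+2}\circ\Phi_{k-i+3}\circ\cdots\circ\Phi_k(b_1,\dots,b_k)\in\mathbb{F}_q^{k-i+1}$ (for $i=1$ this composite is the identity, so $a_1=b_1$). *)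

From HB Require Import structures.
From mathcomp Require Import all_boot all_order all_algebra all_field.
Set Implicit Arguments. Unset Strict Implicit. Unset Printing Implicit Defensive.
Import GRing.Theory.
Local Open Scope ring_scope.

Section Maps.
Variable K : finFieldType.

(* c^{q-2}, with q = #|K| (so 0^{q-2} = 0 and c^{q-2} = c^-1 otherwise). *)
Definition pinv (c : K) : K := c ^+ (#|K| - 2)%N.

(* 1-indexed access: ext v n = a_n = v (n-1) for 1 <= n <= k, 0 otherwise
   (out-of-range values are never used). *)
Definition ext (k : nat) (v : {ffun 'I_k -> K}) (n : nat) : K :=
  if @insub nat (fun m => (m < k)%N) 'I_k n.-1 is Some i then v i else 0.

(* c a i j = c_{i,j}:  c_{i,0} = 0,  c_{i,j} = c_{i,j-1}^{q-2} + a_{i-j+1}. *)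
Fixpoint cc (a : nat -> K) (i j : nat) : K :=
  match j with
  | 0 => 0
  | j'.+1 => pinv (cc a i j') + a (i - j')%N   (* i - (j'+1) + 1 = i - j' *)
  end.

(* F : (a_1..a_k) |-> (b_1..b_k), b_i = c_{i,i}; index i : 'I_k stands for i+1. *)
Definition Fmap (k : nat) (v : {ffun 'I_k -> K}) : {ffun 'I_k -> K} :=
  [ffun i : 'I_k => cc (ext v) i.+1 i.+1].

Definition Phi (s : seq K) : seq K :=
  match s with
  | [::] => [::]
  | e1 :: es => [seq pinv (x - e1) | x <- es]
  end.

(* G : (b_1..b_k) |-> (a_1..a_k), a_i = first entry of
   Phi_{k-i+2} o ... o Phi_k (b)  (i-1 applications); index i : 'I_k stands for i+1. *)
Definition Gmap (k : nat) (v : {ffun 'I_k -> K}) : {ffun 'I_k -> K} :=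
  [ffun i : 'I_k => head 0 (iter i Phi [seq v j | j <- enum 'I_k])].

End Maps.

From HB Require Import structures.
From mathcomp Require Import all_boot all_order all_algebra all_field.
Import GRing.Theory.

Set Implicit Arguments.
Unset Strict Implicit.
Unset Printing Implicit Defensive.

(* On a field with q > 2 elements the map c |-> c^(q-2) is the
   inversion extended by 0^(q-2) = 0, hence an involution.  Extend F to an
   arbitrary sequence a = (a_1, a_2, ...) by letting [Fseq a n] be the list
   (c_{1,1}, ..., c_{n,n}).  Since c_{1,1} = a_1 and
     c_{m,m} - a_1 = c_{m,m-1}^(q-2),  with c_{m,m-1} = c'_{m-1,m-1}
   the diagonal entry of the shifted sequence a' = (a_2, a_3, ...), one step
   of Phi turns F(a) into F(a') (lemma [Phi_Fseq]).  Iterating, the first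
   entry of Phi^(i-1)(F(a)) is a_i, i.e. G o F = id.  Since F is then an
   injective endomap of the finite set K^k, it is bijective, and the other
   identity F o G = id follows. *)

Local Open Scope ring_scope.

Section ExtendedInverse.
Variable K : finFieldType.
Hypothesis card_gt2 : (2 < #|K|)%N.

(* 0^(q-2) = 0 requires the exponent q - 2 to be positive. *)
Lemma pinv0 : pinv (0 : K) = 0.
Proof. by rewrite /pinv expr0n; case: #|K| card_gt2 => [|[|[|n]]]. Qed.

(* For x <> 0, x^(q-2) = x^-1 because x^(q-1) = 1. *)
Lemma pinvV (x : K) : x != 0 -> pinv x = x^-1.
Proof.
move=> nz_x; apply: (mulIf nz_x); rewrite mulVf // /pinv -exprSr.
have -> : (#|K| - 2).+1 = #|K|.-1 by case: #|K| card_gt2 => [|[|[|n]]].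
apply: (mulIf nz_x); rewrite mul1r -exprSr prednK ?expf_card //.
by case: #|K| card_gt2.
Qed.

Lemma pinvK : involutive (@pinv K).
Proof.
move=> x; have [->|nz_x] := eqVneq x 0; first by rewrite !pinv0.
by rewrite pinvV // pinvV ?invrK // invr_eq0.
Qed.

End ExtendedInverse.

Section DiagonalSequence.
Variable K : finFieldType.

Lemma eq_cc (a b : nat -> K) i j : a =1 b -> cc a i j = cc b i j.
Proof. by move=> eq_ab; elim: j => //= j ->; rewrite eq_ab. Qed.

(* c_{i+1,j} only reads a_{i+2-j}, ..., a_{i+1}; for j <= i these are the
   entries a'_{i+1-j}, ..., a'_i of the shifted sequence a'_n = a_{n+1}. *)
Lemma cc_shift (a : nat -> K) i j : (j <= i)%N ->
  cc a i.+1 j = cc (fun n => a n.+1) i j.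
Proof.
elim: j => //= j IH lt_ji; rewrite IH ?(ltnW lt_ji) //.
by rewrite subSn // ltnW.
Qed.

Definition Fseq (a : nat -> K) (n : nat) : seq K :=
  [seq cc a m.+1 m.+1 | m <- iota 0 n].

Lemma eq_Fseq (a b : nat -> K) n : a =1 b -> Fseq a n = Fseq b n.
Proof. by move=> eq_ab; apply: eq_map => m; apply: eq_cc. Qed.

(* The first entry of F(a) is c_{1,1} = 0^(q-2) + a_1 = a_1. *)
Lemma head_Fseq (a : nat -> K) n : (2 < #|K|)%N ->
  head 0 (Fseq a n.+1) = a 1%N.
Proof. by move=> card_gt2; rewrite /= pinv0 // add0r. Qed.

Lemma Phi_Fseq (a : nat -> K) n : (2 < #|K|)%N ->
  Phi (Fseq a n) = Fseq (fun m => a m.+1) n.-1.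
Proof.
move=> card_gt2; case: n => // n.
rewrite /Fseq /= -[1%N]addn0 iotaDl -!map_comp pinv0 // add0r.
apply: eq_map => m /=; rewrite add1n !add0n !addn0 subn0.
have -> : (m.+2 - m.+1 = 1)%N by rewrite subSS subSnn.
by rewrite addrK pinvK // cc_shift // -subSn.
Qed.

Lemma iter_Phi_Fseq (a : nat -> K) n j : (2 < #|K|)%N ->
  iter j (@Phi K) (Fseq a n) = Fseq (fun m => a (m + j)%N) (n - j).
Proof.
move=> card_gt2; elim: j => [|j IH] /=.
  by rewrite subn0; apply: eq_Fseq => m; rewrite addn0.
by rewrite IH Phi_Fseq // subnS; apply: eq_Fseq => m; rewrite addSnnS.
Qed.

End DiagonalSequence.

Lemma Fmap_Fseq (K : finFieldType) k (v : {ffun 'I_k -> K}) :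
  [seq Fmap v j | j <- enum 'I_k] = Fseq (ext v) k.
Proof.
rewrite /Fseq -val_enum_ord -map_comp; apply: eq_map => j /=.
by rewrite ffunE.
Qed.

Lemma FmapK (K : finFieldType) k : (2 < #|K|)%N ->
  cancel (@Fmap K k) (@Gmap K k).
Proof.
move=> card_gt2 v; apply/ffunP => i; rewrite ffunE Fmap_Fseq iter_Phi_Fseq //.
have : (0 < k - i)%N by rewrite subn_gt0.
case: (k - i)%N => // n _; rewrite head_Fseq //.
by rewrite /ext /= add0n valK.
Qed.

Theorem theorem3p1 (K : finFieldType) (k : nat) :
  (2 < #|K|)%N -> (1 <= k)%N ->
  cancel (@Fmap K k) (@Gmap K k) /\ cancel (@Gmap K k) (@Fmap K k) /\
  bijective (@Fmap K k) /\ bijective (@Gmap K k).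
Proof.
move=> card_gt2 _.
have GF : cancel (@Fmap K k) (@Gmap K k) := FmapK card_gt2.
have bijF : bijective (@Fmap K k) := injF_bij (can_inj GF).
have FG : cancel (@Gmap K k) (@Fmap K k) by apply/(bij_can_sym bijF).
by split; [|split; [|split; [|exists (@Fmap K k)]]].
Qed.
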